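(* For every even integer $k\ge 0$ and each sign $\pm$, $h^{\pm}_k(2)=t^{\pm}_k(2)$.
   Context: Fix a permutation $(a,b,c)$ of $(1,2,3)$. $T_\pm$ is the directed graph on vertices $abc,bca,cab$ having both arcs between each pair; the clockwise arcs $abc\to cab$, $cab\to bca$, $bca\to abc$ have sign $+$ and their reverses sign $-$. $H_\pm$ is the directed graph on the $6$-cycle $aba-bcc-aab-cbc-baa-ccb-aba$ with both arcs for each edge; the clockwise direction is $aba\to ccb\to baa\to cbc\to aab\to bcc\to aba$, clockwise arcs have sign $-$ and counterclockwise arcs (their reverses) sign $+$. A walk is positive (negative) if the product of the signs of its arcs is $+$ ($-$). For vertices $x,y$ such that the clockwise path from $x$ to $y$ has length $\ell$, $t^{+}_k(\ell)$ (resp. $t^-_k(\ell)$) is the number of positive (resp. negative) walks of length $k$ from $x$ to $y$ in $T_\pm$, and $h^{\pm}_k(\ell)$ is defined analogously in $H_\pm$. *)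

From mathcomp Require Import all_boot.
Set Implicit Arguments. Unset Strict Implicit. Unset Printing Implicit Defensive.

(* Vertices of a directed n-cycle are 'I_n, listed in clockwise order:
   the clockwise successor of u is [cw u] (value (u+1) mod n).
   T_pm : n = 3, vertices 0 = abc, 1 = cab, 2 = bca
          (clockwise arcs abc->cab->bca->abc).
   H_pm : n = 6, vertices 0 = aba, 1 = ccb, 2 = baa, 3 = cbc, 4 = aab, 5 = bcc
          (clockwise arcs aba->ccb->baa->cbc->aab->bcc->aba).
   In both graphs the arcs are exactly the clockwise arcs u -> cw u and their
   reverses cw u -> u. Signs are booleans: true = +, false = -. *)

Definition cw n (u : 'I_n) : 'I_n := ordS u.

Definition cycle_arc n (u v : 'I_n) : bool := (v == cw u) || (u == cw v).

Definition signT (u v : 'I_3) : bool := v == cw u.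
Definition signH (u v : 'I_6) : bool := ~~ (v == cw u).

(* A walk of length k from x is given by the k.-tuple of vertices visited
   after x; its arcs are consecutive pairs. *)
Definition is_walk n (x : 'I_n) k (w : k.-tuple 'I_n) (y : 'I_n) : bool :=
  path (@cycle_arc n) x w && (last x w == y).

Definition walk_sign n (sgn : 'I_n -> 'I_n -> bool) (x : 'I_n) (w : seq 'I_n) : bool :=
  ~~ odd (count id (pairmap (fun u v => ~~ sgn u v) x w)).

Definition nwalks n (sgn : 'I_n -> 'I_n -> bool) (s : bool) (k : nat) (x y : 'I_n) : nat :=
  #|[set w : k.-tuple 'I_n | is_walk x w y && (walk_sign sgn x w == s)]|.

Definition cwdist n (x y : 'I_n) : nat := (y + n - x) %% n.

From mathcomp Require Import all_boot zify.
Set Implicit Arguments.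
Unset Strict Implicit.
Unset Printing Implicit Defensive.

(* By rotation invariance a pair at
   clockwise distance 2 may be moved to the pair (1, 0) in T_pm and (4, 0) in
   H_pm. Counting walks into 0 by their first step, the equalities "T_pm from 2
   = T_pm from 1, H_pm from 0 = T_pm from 0, H_pm from 2 = H_pm from 4 = T_pm
   from 1" (for both signs) are preserved when the length grows by two, and
   they hold for length 0. *)

Definition cyc_succ n x := if x.+1 == n then 0 else x.+1.
Definition cyc_pred n x := if x is x'.+1 then x' else n.-1.

(* Signed walks on the n-cycle with clockwise arcs of sign [c] and reverse
   arcs of sign [~~ c], on natural-number labels so that small instances
   compute. *)
Fixpoint cycle_walks n (c : bool) k (s : bool) x y : nat :=
  match k with
  | 0 => s && (x == y)
  | k'.+1 => cycle_walks n c k' (s == c) (cyc_succ n x) y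
           + cycle_walks n c k' (s == ~~ c) (cyc_pred n x) y
  end.

Lemma cycle_walks0 n c s x y : cycle_walks n c 0 s x y = s && (x == y).
Proof. by []. Qed.

Lemma cycle_walksS n c k s x y :
  cycle_walks n c k.+1 s x y = cycle_walks n c k (s == c) (cyc_succ n x) y
                               + cycle_walks n c k (s == ~~ c) (cyc_pred n x) y.
Proof. by []. Qed.

Lemma val_cw n (u : 'I_n) : val (cw u) = cyc_succ n u.
Proof.
rewrite /= /cyc_succ; case: eqP => [->|ne]; first exact: modnn.
by rewrite modn_small //; have := ltn_ord u; lia.
Qed.

Lemma val_ord_pred n (u : 'I_n) : val (ord_pred u) = cyc_pred n u.
Proof.
rewrite /= /cyc_pred; have := ltn_ord u; case: (nat_of_ord u) => [|v] v_lt.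
  by rewrite add0n modn_small //; lia.
by rewrite addSn /= modnDr modn_small //; lia.
Qed.

Lemma cwK n : cancel (@cw n) (@ord_pred n).
Proof. exact: ordSK. Qed.

Lemma ord_pred_cwK n : cancel (@ord_pred n) (@cw n).
Proof. exact: ord_predK. Qed.

Lemma cw_inj n : injective (@cw n).
Proof. exact: ordS_inj. Qed.

Lemma val_iter_cw n (x : 'I_n) j : val (iter j (@cw _) x) = (x + j) %% n.
Proof.
elim: j => [|j IH]; first by rewrite addn0 modn_small.
by rewrite iterS /= IH -addn1 modnDml addn1 addnS.
Qed.

Lemma iter_cwdist n (x y : 'I_n) : x = iter (n - cwdist x y) (@cw _) y.
Proof.
apply: val_inj; rewrite val_iter_cw /cwdist /=.
have := ltn_ord x; have := ltn_ord y.
have [le_xy|lt_yx] := leqP x y => y_lt x_lt.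
- have -> : (y + n - x) %% n = y - x.
    by rewrite (_ : y + n - x = y - x + n) ?modnDr ?modn_small //; lia.
  by rewrite (_ : y + (n - (y - x)) = x + n) ?modnDr ?modn_small //; lia.
- rewrite [(y + n - x) %% n]modn_small; last by lia.
  by rewrite (_ : y + (n - (y + n - x)) = x) ?modn_small //; lia.
Qed.

Lemma is_walk_cons n (x y v : 'I_n) k (t : k.-tuple 'I_n) :
  is_walk x [tuple of v :: t] y = cycle_arc x v && is_walk v t y.
Proof. by rewrite /is_walk /= andbA. Qed.

Lemma walk_sign_cons n sgn (x v : 'I_n) t :
  walk_sign sgn x (v :: t) = (sgn x v == walk_sign sgn v t).
Proof. by rewrite /walk_sign /= oddD; case: (sgn x v); case: (odd (count _ _)). Qed.

Lemma nwalks0 n sgn s (x y : 'I_n) : nwalks sgn s 0 x y = s && (x == y).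
Proof.
rewrite /nwalks (_ : [set w : 0.-tuple 'I_n | _] = if s && (x == y) then setT else set0).
  by case: ifP; rewrite ?cardsT ?card_tuple ?cards0.
apply/setP => w; rewrite (tuple0 w) inE /is_walk /walk_sign /=.
by case: s; case: (x == y); rewrite ?inE.
Qed.

Lemma nwalksS n sgn s k (x y : 'I_n) :
  nwalks sgn s k.+1 x y = \sum_(v | cycle_arc x v) nwalks sgn (s == sgn x v) k v y.
Proof.
rewrite /nwalks -sum1_card.
rewrite (reindex (fun p : 'I_n * k.-tuple 'I_n => [tuple of p.1 :: p.2])) /=; last first.
  exists (fun w : k.+1.-tuple 'I_n => (thead w, behead_tuple w)) => [[v t] _ | w _].
    by congr pair; apply: val_inj.
  by case/tupleP: w => v t; apply: val_inj.
rewrite (eq_bigl (fun p => cycle_arc x p.1 && (p.2 \in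
          [set t : k.-tuple 'I_n | is_walk p.1 t y && (walk_sign sgn p.1 t == (s == sgn x p.1))])));
  last first.
  move=> [v t]; rewrite !inE is_walk_cons walk_sign_cons /=.
  by case: (cycle_arc _ _); case: (sgn x v); case: s; case: (walk_sign _ _ _).
by symmetry; under eq_bigr => v _ do rewrite -sum1_card; rewrite pair_big_dep.
Qed.

Lemma ord_pred_neq_cw n (x : 'I_n) : 2 < n -> ord_pred x != cw x.
Proof.
move=> n_gt2; rewrite -val_eqE val_cw val_ord_pred /cyc_succ /cyc_pred.
by have := ltn_ord x; case: (nat_of_ord x) => [|v] v_lt; case: ifP => /eqP ? /=; apply/eqP; lia.
Qed.

Lemma sum_cycle_arc n (x : 'I_n) (f : 'I_n -> nat) : 2 < n ->
  \sum_(v | cycle_arc x v) f v = f (cw x) + f (ord_pred x).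
Proof.
move=> n_gt2; have neq := ord_pred_neq_cw x n_gt2.
rewrite (bigD1 (cw x)) /= ?/cycle_arc ?eqxx //.
rewrite (bigD1 (ord_pred x)) /= ?ord_pred_cwK ?eqxx ?orbT ?neq //.
rewrite big1 ?addn0 // => v /andP [/andP [/= arc_v ne_cw] ne_pred].
move: arc_v; rewrite (negbTE ne_cw) /=.
by move/eqP => def_x; rewrite def_x cwK eqxx in ne_pred.
Qed.

Lemma nwalks_cycle_walks n (sgn : 'I_n -> 'I_n -> bool) (c : bool) :
  2 < n -> (forall u v, sgn u v = ((v == cw u) == c)) ->
  forall k s (x y : 'I_n), nwalks sgn s k x y = cycle_walks n c k s x y.
Proof.
move=> n_gt2 sgnE; elim=> [|k IH] s x y; first by rewrite nwalks0.
rewrite nwalksS (sum_cycle_arc x (fun v => nwalks sgn _ k v y)) // !IH.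
rewrite cycle_walksS -val_cw -val_ord_pred !sgnE eqxx (negbTE (ord_pred_neq_cw x n_gt2)).
by case: c {sgnE IH}; case: s.
Qed.

Lemma cycle_walks_cw n c k s (x y : 'I_n) :
  cycle_walks n c k s (cw x) (cw y) = cycle_walks n c k s x y.
Proof.
elim: k s x y => [|k IH] s x y; first by rewrite !cycle_walks0 !val_eqE (inj_eq (@cw_inj n)).
rewrite !cycle_walksS -!val_cw -!val_ord_pred IH cwK.
by rewrite -[in X in _ + X = _](ord_pred_cwK x) IH.
Qed.

Lemma cycle_walks_iter_cw n c k s j (x y : 'I_n) :
  cycle_walks n c k s (iter j (@cw _) x) (iter j (@cw _) y) = cycle_walks n c k s x y.
Proof.
elim: j => [//|j IH] in x y *.
by rewrite !iterSr IH cycle_walks_cw.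
Qed.

Lemma cycle_walks_to_ord0 n c k s j (y : 'I_n.+1) :
  cycle_walks n.+1 c k s (iter j (@cw _) y) y = cycle_walks n.+1 c k s (j %% n.+1) 0.
Proof.
have y_iter (z : 'I_n.+1) : z = iter z (@cw _) ord0.
  by apply: val_inj; rewrite val_iter_cw add0n modn_small.
rewrite {1 2}(y_iter y) -iterD addnC iterD cycle_walks_iter_cw.
by rewrite val_iter_cw add0n.
Qed.

Definition even_length_invariant k := forall s,
  [/\ cycle_walks 3 true k s 2 0 = cycle_walks 3 true k s 1 0,
      cycle_walks 6 false k s 0 0 = cycle_walks 3 true k s 0 0,
      cycle_walks 6 false k s 2 0 = cycle_walks 3 true k s 1 0 &
      cycle_walks 6 false k s 4 0 = cycle_walks 3 true k s 1 0].

Lemma even_length_invariant_step k :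
  even_length_invariant k -> even_length_invariant k.+2.
Proof.
move=> inv s; have [a1 a2 a3 a4] := inv true; have [b1 b2 b3 b4] := inv false.
by case: s; split; rewrite !cycle_walksS /cyc_succ /cyc_pred; cbn -[addn]; lia.
Qed.

Lemma even_length_invariant_double m : even_length_invariant m.*2.
Proof.
elim: m => [|m IH]; first by case.
by rewrite doubleS; apply: even_length_invariant_step.
Qed.

Theorem lemma12 (k : nat) (s : bool) :
  ~~ odd k ->
  forall (x y : 'I_3) (x' y' : 'I_6),
    cwdist x y = 2 -> cwdist x' y' = 2 ->
    nwalks signH s k x' y' = nwalks signT s k x y.
Proof.
move=> k_even x y x' y' dist_xy dist_xy'.
have signHE u v : signH u v = ((v == cw u) == false) by rewrite /signH; case: eqP.
have signTE u v : signT u v = ((v == cw u) == true) by rewrite /signT eqb_id.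
rewrite (nwalks_cycle_walks _ signHE) // (nwalks_cycle_walks _ signTE) //.
rewrite (iter_cwdist x y) (iter_cwdist x' y') dist_xy dist_xy' !cycle_walks_to_ord0 /=.
rewrite -(odd_double_half k) (negbTE k_even) add0n.
by have [_ _ _ ->] := even_length_invariant_double k./2 s.
Qed.
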